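(* Let $\alpha_1,\alpha_2,\alpha_3,\beta_1,\beta_2,\beta_3,\beta_4,\gamma_1,\gamma_2,\gamma_3,\gamma_4$ be positive real constants, and set $A_1=\alpha_1+\alpha_2+\alpha_3$, $A_2=\beta_1-\beta_4$, $A_3=\gamma_1-\gamma_4$. Consider the system, on the simplex $\{(x_0,x_1,x_2): x_i\ge 0,\ x_0+x_1+x_2=1\}$, $$\frac{dx_0}{dt}=\alpha_1x_0+\beta_2x_1+\gamma_2x_2-x_0(A_1x_0+A_2x_1+A_3x_2),$$ $$\frac{dx_1}{dt}=\alpha_2x_0+(\beta_1-\beta_2-\beta_3-\beta_4)x_1+\gamma_3x_2-x_1(A_1x_0+A_2x_1+A_3x_2),$$ $$\frac{dx_2}{dt}=\alpha_3x_0+\beta_3x_1+(\gamma_1-\gamma_2-\gamma_3-\gamma_4)x_2-x_2(A_1x_0+A_2x_1+A_3x_2).$$ Then this system has a unique fixed point with all coordinates positive, and this fixed point is stable.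
   Context: This is the ''reversible model'' for the proportions $x_0,x_1,x_2$ of three cancer cell phenotypes CSC$_0$, NSCC$_1$, NSCC$_2$, obtained by normalizing the linear system $dX/dt=QX$ for cell numbers $X=(X_0,X_1,X_2)$, $x_i=X_i/(X_0+X_1+X_2)$, where $$Q=\begin{pmatrix}\alpha_1&\beta_2&\gamma_2\\ \alpha_2&\beta_1-\beta_2-\beta_3-\beta_4&\gamma_3\\ \alpha_3&\beta_3&\gamma_1-\gamma_2-\gamma_3-\gamma_4\end{pmatrix}.$$ Parameters: $\alpha_1$ CSC symmetric division, $\alpha_2,\alpha_3$ asymmetric CSC division into NSCC$_1$, NSCC$_2$; $\beta_1,\gamma_1$ NSCC divisions; $\beta_2,\gamma_2$ de-differentiation to CSC; $\beta_3,\gamma_3$ interconversion between NSCC$_1$ and NSCC$_2$; $\beta_4,\gamma_4$ death rates. *)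

From Stdlib Require Import Reals.
From Coquelicot Require Import Coquelicot.
Open Scope R_scope.

Record params := Params {
  al1 : R; al2 : R; al3 : R;
  be1 : R; be2 : R; be3 : R; be4 : R;
  ga1 : R; ga2 : R; ga3 : R; ga4 : R }.

Definition params_pos (p : params) : Prop :=
  0 < al1 p /\ 0 < al2 p /\ 0 < al3 p /\
  0 < be1 p /\ 0 < be2 p /\ 0 < be3 p /\ 0 < be4 p /\
  0 < ga1 p /\ 0 < ga2 p /\ 0 < ga3 p /\ 0 < ga4 p.

Definition A1 (p : params) := al1 p + al2 p + al3 p.
Definition A2 (p : params) := be1 p - be4 p.
Definition A3 (p : params) := ga1 p - ga4 p.

Definition growth (p : params) (x0 x1 x2 : R) :=
  A1 p * x0 + A2 p * x1 + A3 p * x2.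

Definition F0 (p : params) (x0 x1 x2 : R) :=
  al1 p * x0 + be2 p * x1 + ga2 p * x2 - x0 * growth p x0 x1 x2.
Definition F1 (p : params) (x0 x1 x2 : R) :=
  al2 p * x0 + (be1 p - be2 p - be3 p - be4 p) * x1 + ga3 p * x2
  - x1 * growth p x0 x1 x2.
Definition F2 (p : params) (x0 x1 x2 : R) :=
  al3 p * x0 + be3 p * x1 + (ga1 p - ga2 p - ga3 p - ga4 p) * x2
  - x2 * growth p x0 x1 x2.

Definition in_simplex (x0 x1 x2 : R) : Prop :=
  0 <= x0 /\ 0 <= x1 /\ 0 <= x2 /\ x0 + x1 + x2 = 1.

Definition is_fixed_point (p : params) (x0 x1 x2 : R) : Prop :=
  F0 p x0 x1 x2 = 0 /\ F1 p x0 x1 x2 = 0 /\ F2 p x0 x1 x2 = 0.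

Definition is_solution (p : params) (x0 x1 x2 : R -> R) : Prop :=
  (forall t, 0 < t ->
     is_derive x0 t (F0 p (x0 t) (x1 t) (x2 t)) /\
     is_derive x1 t (F1 p (x0 t) (x1 t) (x2 t)) /\
     is_derive x2 t (F2 p (x0 t) (x1 t) (x2 t))) /\
  filterlim x0 (at_right 0) (locally (x0 0)) /\
  filterlim x1 (at_right 0) (locally (x1 0)) /\
  filterlim x2 (at_right 0) (locally (x2 0)).

Definition dist3 (x0 x1 x2 y0 y1 y2 : R) : R :=
  sqrt ((x0 - y0)^2 + (x1 - y1)^2 + (x2 - y2)^2).

Definition lyapunov_stable (p : params) (e0 e1 e2 : R) : Prop :=
  forall eps, 0 < eps -> exists delta, 0 < delta /\
    forall x0 x1 x2 : R -> R,
      is_solution p x0 x1 x2 ->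
      in_simplex (x0 0) (x1 0) (x2 0) ->
      dist3 (x0 0) (x1 0) (x2 0) e0 e1 e2 < delta ->
      forall t, 0 <= t -> dist3 (x0 t) (x1 t) (x2 t) e0 e1 e2 < eps.

(* The system is [x' = Q x - (1 . Q x) x], since the columns of [Q] sum to [A1, A2, A3].  The
   off-diagonal entries of [Q] are positive, so [Q] has a Perron eigenvalue [l] (the root of
   [det (l I - Q)] beyond the larger eigenvalue of the lower 2x2 block) with positive right and
   left eigenvectors [e] and [w], normalised by [e0 + e1 + e2 = 1] and [w . e = 1].  A positive
   fixed point [y] on the simplex satisfies [Q y = g y]; pairing with [w] gives [g = l], and the
   [l]-eigenspace is a line, so [y = e].

   For stability take [V x = (sum w_i x_i^2 / e_i) / (sum w_i x_i)^2].  It is homogeneous of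
   degree 0, so along the flow it evolves as along [X' = Q X], and its derivative is
   [- sum_(i<j) c_ij (x_i/e_i - x_j/e_j)^2 <= 0] with [c_ij > 0].  By Cauchy-Schwarz [V >= 1],
   with [V - 1] comparable to [|x - e|^2] near [e] on the plane [x0 + x1 + x2 = 1]; a
   continuity argument (which also keeps the solution on that plane) turns this into Lyapunov
   stability. *)

From Pilot Require Import Defs.
From Stdlib Require Import Reals Lra Psatz.
From Coquelicot Require Import Coquelicot.
Open Scope R_scope.

Definition q11 (p : params) := be1 p - be2 p - be3 p - be4 p.
Definition q22 (p : params) := ga1 p - ga2 p - ga3 p - ga4 p.

Definition Qx0 (p : params) (x0 x1 x2 : R) := al1 p * x0 + be2 p * x1 + ga2 p * x2.
Definition Qx1 (p : params) (x0 x1 x2 : R) := al2 p * x0 + q11 p * x1 + ga3 p * x2.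
Definition Qx2 (p : params) (x0 x1 x2 : R) := al3 p * x0 + be3 p * x1 + q22 p * x2.

Lemma growth_Qx (p : params) (x0 x1 x2 : R) :
  growth p x0 x1 x2 = Qx0 p x0 x1 x2 + Qx1 p x0 x1 x2 + Qx2 p x0 x1 x2.
Proof. unfold growth, Defs.A1, Defs.A2, Defs.A3, Qx0, Qx1, Qx2, q11, q22; ring. Qed.

Lemma F_Qx (p : params) (x0 x1 x2 : R) :
  F0 p x0 x1 x2 = Qx0 p x0 x1 x2 - x0 * growth p x0 x1 x2 /\
  F1 p x0 x1 x2 = Qx1 p x0 x1 x2 - x1 * growth p x0 x1 x2 /\
  F2 p x0 x1 x2 = Qx2 p x0 x1 x2 - x2 * growth p x0 x1 x2.
Proof. repeat split. Qed.

(** * The Perron eigenvalue *)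

Definition minor12 (p : params) (l : R) := (l - q11 p) * (l - q22 p) - ga3 p * be3 p.

(* [det (l I - Q)], expanded along the first row. *)
Definition charpoly (p : params) (l : R) :=
  (l - al1 p) * minor12 p l
  - be2 p * (al2 p * (l - q22 p) + ga3 p * al3 p)
  - ga2 p * (al3 p * (l - q11 p) + be3 p * al2 p).

Lemma quadratic_larger_root (a b c : R) : 0 < c ->
  exists mu, a < mu /\ b < mu /\
    forall l, (l - a) * (l - b) - c = (l - mu) * (l - (a + b - mu)).
Proof.
  intros hc.
  set (q := ((a - b) / 2) ^ 2 + c).
  assert (hq : 0 < q) by (unfold q; pose proof (pow2_ge_0 ((a - b) / 2)); lra).
  pose proof (sqrt_sqrt q (Rlt_le _ _ hq)) as hr.
  pose proof (sqrt_lt_R0 q hq) as hr0.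
  set (r := sqrt q) in *.
  assert (hd : ((a - b) / 2) ^ 2 < r * r) by (rewrite hr; unfold q; lra).
  exists ((a + b) / 2 + r). repeat split; try nra.
  intro l. replace c with (r * r - ((a - b) / 2) ^ 2) by (rewrite hr; unfold q; ring).
  field.
Qed.

Lemma perron_root (p : params) : params_pos p ->
  exists l, charpoly p l = 0 /\ q11 p < l /\ q22 p < l /\ 0 < minor12 p l.
Proof.
  intros (h1 & h2 & h3 & _ & h5 & h6 & _ & _ & h9 & h10 & _).
  destruct (quadratic_larger_root (q11 p) (q22 p) (ga3 p * be3 p)) as (mu & hm1 & hm2 & hmu);
    [nra|].
  assert (hminor : forall l, mu <= l -> (l - mu) ^ 2 <= minor12 p l)
    by (intros l hl; unfold minor12; rewrite hmu; nra).
  (* On [l = mu + y] the two subtracted terms of [charpoly] are affine: [a * y + b]. *)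
  set (a := be2 p * al2 p + ga2 p * al3 p).
  set (b := be2 p * (al2 p * (mu - q22 p) + ga3 p * al3 p)
            + ga2 p * (al3 p * (mu - q11 p) + be3 p * al2 p)).
  assert (ha : 0 < a) by (unfold a; nra).
  assert (hb : 0 < b).
  { unfold b. apply Rplus_lt_0_compat; apply Rmult_lt_0_compat; nra. }
  assert (hlin : forall y,
    charpoly p (mu + y) = (mu + y - al1 p) * minor12 p (mu + y) - (a * y + b))
    by (intro y; unfold charpoly, a, b; ring).
  assert (hneg : charpoly p mu < 0).
  { replace mu with (mu + 0) by ring. rewrite hlin.
    replace (minor12 p (mu + 0)) with 0 by (unfold minor12; rewrite hmu; ring). lra. }
  set (y := 1 + Rabs (mu - al1 p) + a + b).
  assert (hy : 1 + a + b <= mu + y - al1 p)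
    by (unfold y; pose proof (Rle_abs (- (mu - al1 p))); rewrite Rabs_Ropp in *; lra).
  assert (hy1 : 1 <= y) by (unfold y; pose proof (Rabs_pos (mu - al1 p)); lra).
  assert (hpos : 0 < charpoly p (mu + y)).
  { rewrite hlin.
    assert (y ^ 2 <= minor12 p (mu + y)) by (apply (Rle_trans _ ((mu + y - mu) ^ 2));
      [right; f_equal; ring | apply hminor; lra]).
    assert ((1 + a + b) * y ^ 2 <= (mu + y - al1 p) * minor12 p (mu + y))
      by (apply Rmult_le_compat; nra).
    assert (y <= y ^ 2) by nra.
    assert (a * y <= a * y ^ 2) by (apply Rmult_le_compat_l; lra).
    assert (b <= b * y ^ 2) by nra.
    lra. }
  assert (hcont : continuity (charpoly p)) by (unfold charpoly, minor12; reg).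
  destruct (IVT (charpoly p) mu (mu + y) hcont ltac:(lra) hneg hpos) as (l & [hl1 _] & hl).
  assert (mu < l) by (destruct hl1 as [|<-]; [assumption | lra]).
  exists l. repeat split; [assumption | lra | lra |].
  pose proof (hminor l ltac:(lra)). nra.
Qed.

Definition right_eigen (p : params) (l e0 e1 e2 : R) :=
  Qx0 p e0 e1 e2 = l * e0 /\ Qx1 p e0 e1 e2 = l * e1 /\ Qx2 p e0 e1 e2 = l * e2.

Definition left_eigen (p : params) (l w0 w1 w2 : R) :=
  w0 * al1 p + w1 * al2 p + w2 * al3 p = l * w0 /\
  w0 * be2 p + w1 * q11 p + w2 * be3 p = l * w1 /\
  w0 * ga2 p + w1 * ga3 p + w2 * q22 p = l * w2.

Lemma left_eigen_Qx (p : params) (l w0 w1 w2 x0 x1 x2 : R) : left_eigen p l w0 w1 w2 ->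
  w0 * Qx0 p x0 x1 x2 + w1 * Qx1 p x0 x1 x2 + w2 * Qx2 p x0 x1 x2
  = l * (w0 * x0 + w1 * x1 + w2 * x2).
Proof.
  intros (c0 & c1 & c2).
  transitivity (x0 * (w0 * al1 p + w1 * al2 p + w2 * al3 p)
    + x1 * (w0 * be2 p + w1 * q11 p + w2 * be3 p) + x2 * (w0 * ga2 p + w1 * ga3 p + w2 * q22 p));
    [unfold Qx0, Qx1, Qx2; ring |].
  rewrite c0, c1, c2; ring.
Qed.

(* Cofactors of the first row (resp. column) of [l I - Q], divided by [minor12 p l]. *)
Definition right_cof1 (p : params) (l : R) := (al2 p * (l - q22 p) + ga3 p * al3 p) / minor12 p l.
Definition right_cof2 (p : params) (l : R) := (al3 p * (l - q11 p) + be3 p * al2 p) / minor12 p l.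
Definition left_cof1 (p : params) (l : R) := (be2 p * (l - q22 p) + be3 p * ga2 p) / minor12 p l.
Definition left_cof2 (p : params) (l : R) := (ga2 p * (l - q11 p) + ga3 p * be2 p) / minor12 p l.

Lemma right_eigen_cofactors (p : params) (l c : R) :
  charpoly p l = 0 -> minor12 p l <> 0 ->
  right_eigen p l c (c * right_cof1 p l) (c * right_cof2 p l).
Proof.
  intros hP hD.
  assert (h0 : al1 p + be2 p * right_cof1 p l + ga2 p * right_cof2 p l
               = l - charpoly p l / minor12 p l)
    by (unfold charpoly, right_cof1, right_cof2; field; exact hD).
  rewrite hP, Rdiv_0_l, Rminus_0_r in h0.
  unfold right_eigen, Qx0, Qx1, Qx2; repeat split.
  - transitivity (c * (al1 p + be2 p * right_cof1 p l + ga2 p * right_cof2 p l));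
      [ring | rewrite h0; ring].
  - unfold right_cof1, right_cof2, minor12 in *; field; exact hD.
  - unfold right_cof1, right_cof2, minor12 in *; field; exact hD.
Qed.

Lemma left_eigen_cofactors (p : params) (l c : R) :
  charpoly p l = 0 -> minor12 p l <> 0 ->
  left_eigen p l c (c * left_cof1 p l) (c * left_cof2 p l).
Proof.
  intros hP hD.
  assert (h0 : al1 p + left_cof1 p l * al2 p + left_cof2 p l * al3 p
               = l - charpoly p l / minor12 p l)
    by (unfold charpoly, left_cof1, left_cof2; field; exact hD).
  rewrite hP, Rdiv_0_l, Rminus_0_r in h0.
  unfold left_eigen; repeat split.
  - transitivity (c * (al1 p + left_cof1 p l * al2 p + left_cof2 p l * al3 p));
      [ring | rewrite h0; ring].
  - unfold left_cof1, left_cof2, minor12 in *; field; exact hD.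
  - unfold left_cof1, left_cof2, minor12 in *; field; exact hD.
Qed.

Record perron_data (p : params) (l e0 e1 e2 w0 w1 w2 : R) : Prop := {
  e0_pos : 0 < e0; e1_pos : 0 < e1; e2_pos : 0 < e2;
  e_sum : e0 + e1 + e2 = 1;
  w0_pos : 0 < w0; w1_pos : 0 < w1; w2_pos : 0 < w2;
  w_dot_e : w0 * e0 + w1 * e1 + w2 * e2 = 1;
  e_right : right_eigen p l e0 e1 e2;
  w_left : left_eigen p l w0 w1 w2;
  minor12_pos : 0 < minor12 p l }.

Lemma perron_data_exists (p : params) : params_pos p ->
  exists l e0 e1 e2 w0 w1 w2, perron_data p l e0 e1 e2 w0 w1 w2.
Proof.
  intros hp; destruct (perron_root p hp) as (l & hP & hl1 & hl2 & hD).
  destruct hp as (h1 & h2 & h3 & _ & h5 & h6 & _ & _ & h9 & h10 & _).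
  assert (hpos : forall a b c d,
    0 < a -> 0 < b -> 0 < c -> 0 < d -> 0 < (a * b + c * d) / minor12 p l)
    by (intros; apply Rdiv_lt_0_compat; [nra | exact hD]).
  pose proof (hpos (al2 p) (l - q22 p) _ _ h2 ltac:(lra) h10 h3) as hE1.
  pose proof (hpos (al3 p) (l - q11 p) _ _ h3 ltac:(lra) h6 h2) as hE2.
  pose proof (hpos (be2 p) (l - q22 p) _ _ h5 ltac:(lra) h6 h9) as hW1.
  pose proof (hpos (ga2 p) (l - q11 p) _ _ h9 ltac:(lra) h10 h5) as hW2.
  fold (right_cof1 p l) in hE1; fold (right_cof2 p l) in hE2.
  fold (left_cof1 p l) in hW1; fold (left_cof2 p l) in hW2.
  set (c := / (1 + right_cof1 p l + right_cof2 p l)).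
  assert (hc : 0 < c) by (apply Rinv_0_lt_compat; lra).
  set (t := c + left_cof1 p l * (c * right_cof1 p l) + left_cof2 p l * (c * right_cof2 p l)).
  assert (he1 : 0 < c * right_cof1 p l) by (apply Rmult_lt_0_compat; lra).
  assert (he2 : 0 < c * right_cof2 p l) by (apply Rmult_lt_0_compat; lra).
  assert (ht : 0 < t) by (unfold t; nra).
  assert (hti : 0 < / t) by (apply Rinv_0_lt_compat; lra).
  exists l, c, (c * right_cof1 p l), (c * right_cof2 p l),
    (/ t), (/ t * left_cof1 p l), (/ t * left_cof2 p l).
  split; try assumption; try (apply Rmult_lt_0_compat; assumption).
  - unfold c; field; apply Rgt_not_eq; lra.
  - transitivity (/ t * t); [unfold t; ring | field; apply Rgt_not_eq; lra].
  - apply right_eigen_cofactors; lra.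
  - apply left_eigen_cofactors; lra.
Qed.

Lemma right_eigen_proportional (p : params) (l e0 e1 e2 y0 y1 y2 : R) :
  minor12 p l <> 0 -> right_eigen p l e0 e1 e2 -> right_eigen p l y0 y1 y2 ->
  e0 * y1 = y0 * e1 /\ e0 * y2 = y0 * e2.
Proof.
  unfold right_eigen, Qx1, Qx2, minor12.
  intros hD (_ & e1' & e2') (_ & y1' & y2').
  set (z1 := e0 * y1 - y0 * e1); set (z2 := e0 * y2 - y0 * e2).
  assert (k1 : (l - q11 p) * z1 = ga3 p * z2).
  { unfold z1, z2. transitivity (e0 * (l * y1) - y0 * (l * e1) - q11 p * (e0 * y1 - y0 * e1));
      [ring | rewrite <- y1', <- e1'; ring]. }
  assert (k2 : (l - q22 p) * z2 = be3 p * z1).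
  { unfold z1, z2. transitivity (e0 * (l * y2) - y0 * (l * e2) - q22 p * (e0 * y2 - y0 * e2));
      [ring | rewrite <- y2', <- e2'; ring]. }
  assert (hz1 : ((l - q11 p) * (l - q22 p) - ga3 p * be3 p) * z1 = 0).
  { transitivity ((l - q22 p) * ((l - q11 p) * z1) - ga3 p * (be3 p * z1)); [ring |].
    rewrite k1, <- k2; ring. }
  assert (hz2 : ((l - q11 p) * (l - q22 p) - ga3 p * be3 p) * z2 = 0).
  { transitivity ((l - q11 p) * ((l - q22 p) * z2) - be3 p * (ga3 p * z2)); [ring |].
    rewrite k2, <- k1; ring. }
  apply Rmult_integral in hz1, hz2; unfold z1, z2 in *; lra.
Qed.

Section FixedPoints.

Variables (p : params) (l e0 e1 e2 w0 w1 w2 : R).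
Hypothesis HP : perron_data p l e0 e1 e2 w0 w1 w2.

Lemma perron_fixed_point : is_fixed_point p e0 e1 e2.
Proof.
  destruct HP as [_ _ _ hs _ _ _ _ (r0 & r1 & r2) _ _].
  assert (hg : growth p e0 e1 e2 = l) by (rewrite growth_Qx, r0, r1, r2; nra).
  unfold is_fixed_point; destruct (F_Qx p e0 e1 e2) as (-> & -> & ->).
  rewrite hg; lra.
Qed.

Lemma positive_fixed_point_unique (y0 y1 y2 : R) :
  0 < y0 -> 0 < y1 -> 0 < y2 -> in_simplex y0 y1 y2 -> is_fixed_point p y0 y1 y2 ->
  y0 = e0 /\ y1 = e1 /\ y2 = e2.
Proof.
  destruct HP as [he0 _ _ hs hw0 hw1 hw2 _ hr hl hD].
  intros hy0 hy1 hy2 (_ & _ & _ & hys) (f0 & f1 & f2).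
  destruct (F_Qx p y0 y1 y2) as (g0 & g1 & g2).
  set (g := growth p y0 y1 y2) in *.
  assert (hgl : g = l).
  { pose proof (left_eigen_Qx p l w0 w1 w2 y0 y1 y2 hl) as hwQ.
    assert (hwy : 0 < w0 * y0 + w1 * y1 + w2 * y2) by nra.
    apply (Rmult_eq_reg_r (w0 * y0 + w1 * y1 + w2 * y2)); [| lra].
    rewrite <- hwQ; nra. }
  assert (hy : right_eigen p l y0 y1 y2) by (unfold right_eigen; rewrite <- hgl; lra).
  destruct (right_eigen_proportional p l e0 e1 e2 y0 y1 y2 ltac:(lra) hr hy) as (k1 & k2).
  assert (e0 = y0).
  { transitivity (e0 * (y0 + y1 + y2)); [rewrite hys; ring |].
    transitivity (y0 * (e0 + e1 + e2)); [| rewrite hs; ring].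
    transitivity (e0 * y0 + e0 * y1 + e0 * y2); [ring | rewrite k1, k2; ring]. }
  subst y0; repeat split; apply (Rmult_eq_reg_l e0); first [assumption | apply Rgt_not_eq; lra].
Qed.

End FixedPoints.

Section FilterLimits.

Context {T : Type} {F : (T -> Prop) -> Prop} {FF : Filter F}.

Lemma filterlim_Rplus (f g : T -> R) (a b : R) :
  filterlim f F (locally a) -> filterlim g F (locally b) ->
  filterlim (fun t => f t + g t) F (locally (a + b)).
Proof.
  intros hf hg.
  exact (filterlim_comp_2 f g Rplus hf hg (@filterlim_plus R_AbsRing R_NormedModule a b)).
Qed.

Lemma filterlim_Rmult (f g : T -> R) (a b : R) :
  filterlim f F (locally a) -> filterlim g F (locally b) ->
  filterlim (fun t => f t * g t) F (locally (a * b)).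
Proof. intros hf hg. exact (filterlim_comp_2 f g Rmult hf hg (@filterlim_mult R_AbsRing a b)). Qed.

Lemma filterlim_Rconst (a : R) : filterlim (fun _ => a) F (locally a).
Proof. apply filterlim_const. Qed.

Lemma filterlim_Rminus (f g : T -> R) (a b : R) :
  filterlim f F (locally a) -> filterlim g F (locally b) ->
  filterlim (fun t => f t - g t) F (locally (a - b)).
Proof.
  intros hf hg.
  apply (filterlim_ext (fun t => f t + (-1) * g t)); [intro; ring |].
  replace (a - b) with (a + (-1) * b) by ring.
  apply filterlim_Rplus, filterlim_Rmult; [| apply filterlim_Rconst |]; assumption.
Qed.

Lemma filterlim_Rinv (f : T -> R) (a : R) :
  filterlim f F (locally a) -> a <> 0 -> filterlim (fun t => / f t) F (locally (/ a)).
Proof.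
  intros hf ha. eapply filterlim_comp; [exact hf |].
  apply (@ex_derive_continuous R_AbsRing R_NormedModule). auto_derive. exact ha.
Qed.

Lemma filterlim_Rpow (f : T -> R) (a : R) (n : nat) :
  filterlim f F (locally a) -> filterlim (fun t => f t ^ n) F (locally (a ^ n)).
Proof.
  intros hf; induction n as [| n IH]; [apply filterlim_Rconst |].
  apply filterlim_Rmult; assumption.
Qed.

End FilterLimits.

Ltac solve_filterlim :=
  repeat first [ assumption | apply filterlim_Rconst | apply filterlim_Rminus
               | apply filterlim_Rplus | apply filterlim_Rpow | apply filterlim_Rmult
               | apply filterlim_Rinv ].

Lemma right_limit_eps (f : R -> R) (a : R) :
  filterlim f (at_right 0) (locally a) -> forall eps, 0 < eps ->
  exists eta, 0 < eta /\ forall t, 0 < t < eta -> Rabs (f t - a) < eps.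
Proof.
  intros hf eps heps.
  destruct (proj1 (filterlim_locally f a) hf (mkposreal eps heps)) as [d hd].
  exists d; split; [apply cond_pos |].
  intros t [ht0 htd]; apply (hd t); [| exact ht0].
  change (Rabs (t - 0) < d); rewrite Rminus_0_r, Rabs_pos_eq; lra.
Qed.

Lemma nonincreasing_on_interval (f df : R -> R) (T : R) :
  0 <= T -> (forall t, 0 < t <= T -> is_derive f t (df t)) ->
  (forall t, 0 < t <= T -> df t <= 0) ->
  filterlim f (at_right 0) (locally (f 0)) -> f T <= f 0.
Proof.
  intros hT hd hneg hf.
  destruct hT as [hT | <-]; [| apply Rle_refl].
  (* By the mean value theorem [f T <= f a] for [0 < a <= T], and [f a -> f 0]. *)
  assert (hmono : forall a, 0 < a <= T -> f T <= f a).
  { intros a ha.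
    destruct (MVT_gen f a T df) as (c & hc & hfc).
    - intros x hx; rewrite Rmin_left, Rmax_right in hx by lra; apply hd; lra.
    - intros x hx; rewrite Rmin_left, Rmax_right in hx by lra.
      apply continuity_pt_filterlim, (@ex_derive_continuous R_AbsRing R_NormedModule).
      exists (df x); apply hd; lra.
    - rewrite Rmin_left, Rmax_right in hc by lra.
      assert (df c <= 0) by (apply hneg; lra). nra. }
  apply Rnot_lt_le; intro hlt.
  destruct (right_limit_eps f (f 0) hf (f T - f 0)) as (eta & heta & hclose); [lra |].
  set (a := Rmin T (eta / 2)).
  assert (ha : 0 < a <= T) by (split; [apply Rmin_glb_lt | apply Rmin_l]; lra).
  assert (ha2 : a < eta) by (unfold a; pose proof (Rmin_r T (eta / 2)); lra).
  pose proof (hmono a ha). specialize (hclose a ltac:(lra)).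
  apply Rabs_def2 in hclose; lra.
Qed.

Lemma continuous_nonneg_eps (h : R -> R) :
  (forall t, 0 < t -> continuous h t) -> filterlim h (at_right 0) (locally (h 0)) ->
  forall t eps, 0 <= t -> 0 < eps -> exists eta, 0 < eta /\
    forall tau, 0 <= tau -> Rabs (tau - t) < eta -> Rabs (h tau - h t) < eps.
Proof.
  intros hc h0 t eps ht heps.
  destruct ht as [ht | <-].
  - destruct (proj1 (filterlim_locally h (h t)) (hc t ht) (mkposreal eps heps))
      as [eta hclose].
    exists eta; split; [apply cond_pos |]; intros tau _ hd; exact (hclose tau hd).
  - destruct (right_limit_eps h (h 0) h0 eps heps) as (eta & heta & hclose).
    exists eta; split; [exact heta |]; intros tau htau hd.
    destruct htau as [htau | <-].
    + apply hclose. rewrite Rminus_0_r, Rabs_pos_eq in hd; lra.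
    + rewrite Rminus_diag, Rabs_R0; exact heps.
Qed.

Lemma continuity_barrier (h : R -> R) (b c : R) :
  c < b -> h 0 < b ->
  (forall t, 0 < t -> continuous h t) -> filterlim h (at_right 0) (locally (h 0)) ->
  (forall T, 0 <= T -> (forall tau, 0 <= tau <= T -> h tau < b) -> h T <= c) ->
  forall t, 0 <= t -> h t <= c.
Proof.
  intros hcb hb0 hc hr0 hstep t1 ht1.
  pose proof (continuous_nonneg_eps h hc hr0) as hcont.
  assert (h00 : h 0 <= c) by (apply hstep; [lra | intros tau htau; replace tau with 0 by lra; lra]).
  set (E := fun T => 0 <= T <= t1 /\ forall tau, 0 <= tau <= T -> h tau <= c).
  assert (hE0 : E 0) by (split; [lra | intros tau htau; replace tau with 0 by lra; exact h00]).
  destruct (completeness E (ex_intro _ t1 (fun T hT => proj2 (proj1 hT))) (ex_intro _ 0 hE0))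
    as [S [hub hlub]].
  assert (hS : 0 <= S <= t1) by (split; [apply hub, hE0 | apply hlub; intros T hT; apply hT]).
  assert (below : forall tau, 0 <= tau < S -> h tau <= c).
  { intros tau htau; apply Rnot_lt_le; intro hlt.
    assert (S <= tau); [| lra].
    apply hlub; intros T (_ & hT); apply Rnot_lt_le; intro hTtau.
    pose proof (hT tau ltac:(lra)); lra. }
  assert (atS : h S <= c).
  { destruct (proj1 hS) as [hS0 | <-]; [| exact h00].
    apply Rnot_lt_le; intro hlt.
    destruct (hcont S (h S - c) ltac:(lra) ltac:(lra)) as (eta & heta & hclose).
    set (tau := Rmax 0 (S - eta / 2)).
    assert (htau : 0 <= tau < S) by (split; [apply Rmax_l | apply Rmax_lub_lt]; lra).
    assert (htau2 : S - eta / 2 <= tau) by apply Rmax_r.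
    assert (hd : Rabs (tau - S) < eta) by (rewrite Rabs_left; lra).
    specialize (hclose tau (proj1 htau) hd); pose proof (below tau htau).
    apply Rabs_def2 in hclose; lra. }
  assert (upto : forall tau, 0 <= tau <= S -> h tau <= c).
  { intros tau htau; destruct (proj2 htau) as [hlt | ->]; [apply below; lra | exact atS]. }
  destruct (proj2 hS) as [hSt | <-]; [| apply upto; lra].
  (* Otherwise [h < b] persists a little beyond [S], and [hstep] pushes [E] past its supremum. *)
  exfalso.
  destruct (hcont S (b - c) ltac:(lra) ltac:(lra)) as (eta & heta & hclose).
  set (T' := Rmin t1 (S + eta / 2)).
  assert (hT' : S < T' <= t1) by (split; [apply Rmin_glb_lt | apply Rmin_l]; lra).
  assert (hT'2 : T' <= S + eta / 2) by apply Rmin_r.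
  assert (hb : forall tau, 0 <= tau <= T' -> h tau < b).
  { intros tau htau; destruct (Rle_or_lt tau S); [pose proof (upto tau ltac:(lra)); lra |].
    specialize (hclose tau (proj1 htau) ltac:(rewrite Rabs_pos_eq; lra)).
    pose proof atS; apply Rabs_def2 in hclose; lra. }
  assert (E T')
    by (split; [lra | intros tau htau; apply hstep; [lra | intros s hs; apply hb; lra]]).
  pose proof (hub T' ltac:(assumption)); lra.
Qed.

Lemma continuous_at_right (g : R -> R) (x : R) :
  continuous g x -> filterlim g (at_right x) (locally (g x)).
Proof. apply filterlim_filter_le_1, filter_le_within. Qed.

Definition sqdist (x0 x1 x2 y0 y1 y2 : R) := (x0 - y0) ^ 2 + (x1 - y1) ^ 2 + (x2 - y2) ^ 2.

Lemma solution_derivatives (p : params) (x0 x1 x2 : R -> R) (t : R) :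
  is_solution p x0 x1 x2 -> 0 < t ->
  Derive (fun s => x0 s) t = F0 p (x0 t) (x1 t) (x2 t) /\
  Derive (fun s => x1 s) t = F1 p (x0 t) (x1 t) (x2 t) /\
  Derive (fun s => x2 s) t = F2 p (x0 t) (x1 t) (x2 t) /\
  ex_derive x0 t /\ ex_derive x1 t /\ ex_derive x2 t.
Proof.
  intros [hd _] ht; destruct (hd t ht) as (d0 & d1 & d2).
  repeat split; try (apply is_derive_unique; assumption); eexists; eassumption.
Qed.

Lemma growth_lower_bound (p : params) (r : R) : exists K, forall x0 x1 x2,
  Rabs x0 <= r -> Rabs x1 <= r -> Rabs x2 <= r -> - K <= growth p x0 x1 x2.
Proof.
  exists (r * (Rabs (Defs.A1 p) + Rabs (Defs.A2 p) + Rabs (Defs.A3 p))).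
  intros x0 x1 x2 h0 h1 h2; unfold growth.
  assert (hterm : forall a x, Rabs x <= r -> - (r * Rabs a) <= a * x).
  { intros a x hx; pose proof (Rabs_pos a).
    assert (Rabs (a * x) <= r * Rabs a) by (rewrite Rabs_mult; nra).
    pose proof (Rle_abs (- (a * x))); rewrite Rabs_Ropp in *; lra. }
  pose proof (hterm (Defs.A1 p) x0 h0); pose proof (hterm (Defs.A2 p) x1 h1);
    pose proof (hterm (Defs.A3 p) x2 h2); lra.
Qed.

(* [u = 1 - x0 - x1 - x2] solves [u' = - growth * u], so [u] cannot leave [0] while the growth
   stays bounded below: [u^2 exp (-2 K t)] is nonincreasing. *)
Lemma solution_sum_one (p : params) (x0 x1 x2 : R -> R) (K T : R) :
  is_solution p x0 x1 x2 -> x0 0 + x1 0 + x2 0 = 1 -> 0 <= T ->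
  (forall t, 0 < t <= T -> - K <= growth p (x0 t) (x1 t) (x2 t)) ->
  x0 T + x1 T + x2 T = 1.
Proof.
  intros hsol hs0 hT hK.
  set (f := fun t => (1 - x0 t - x1 t - x2 t) ^ 2 * exp (- (2 * K) * t)).
  set (df := fun t => - 2 * (1 - x0 t - x1 t - x2 t) ^ 2 * exp (- (2 * K) * t)
                       * (growth p (x0 t) (x1 t) (x2 t) + K)).
  assert (hf : f T <= f 0).
  { apply (nonincreasing_on_interval f df T hT).
    - intros t ht; destruct (solution_derivatives p x0 x1 x2 t hsol (proj1 ht))
        as (D0 & D1 & D2 & ?).
      unfold f, df; auto_derive; [tauto |].
      rewrite D0, D1, D2; unfold F0, F1, F2, growth, Defs.A1, Defs.A2, Defs.A3; ring.
    - intros t ht; unfold df.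
      pose proof (hK t ht); pose proof (exp_pos (- (2 * K) * t));
        pose proof (pow2_ge_0 (1 - x0 t - x1 t - x2 t)).
      assert (0 <= (1 - x0 t - x1 t - x2 t) ^ 2 * exp (- (2 * K) * t)) by nra.
      nra.
    - destruct hsol as (_ & h0 & h1 & h2).
      assert (he : continuous (fun t => exp (- (2 * K) * t)) 0)
        by (apply (@ex_derive_continuous R_AbsRing R_NormedModule); auto_derive; exact I).
      apply continuous_at_right in he.
      unfold f; cbv beta; solve_filterlim. }
  unfold f in hf; rewrite Rmult_0_r, exp_0, Rmult_1_r in hf.
  replace (1 - x0 0 - x1 0 - x2 0) with 0 in hf by lra.
  pose proof (exp_pos (- (2 * K) * T)); pose proof (pow2_ge_0 (1 - x0 T - x1 T - x2 T)).
  assert (hu : (1 - x0 T - x1 T - x2 T) ^ 2 = 0) by nra.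
  nra.
Qed.

Lemma solution_sqdist_continuous (p : params) (x0 x1 x2 : R -> R) (y0 y1 y2 : R) :
  is_solution p x0 x1 x2 ->
  (forall t, 0 < t -> continuous (fun s => sqdist (x0 s) (x1 s) (x2 s) y0 y1 y2) t) /\
  filterlim (fun s => sqdist (x0 s) (x1 s) (x2 s) y0 y1 y2) (at_right 0)
    (locally (sqdist (x0 0) (x1 0) (x2 0) y0 y1 y2)).
Proof.
  intros hsol; split.
  - intros t ht; apply (@ex_derive_continuous R_AbsRing R_NormedModule).
    destruct (solution_derivatives p x0 x1 x2 t hsol ht) as (_ & _ & _ & ?).
    unfold sqdist; auto_derive; tauto.
  - destruct hsol as (_ & h0 & h1 & h2); unfold sqdist; solve_filterlim.
Qed.

(** * Weighted means of three numbers *)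

Lemma cauchy_schwarz3 (a0 a1 a2 b0 b1 b2 : R) :
  (a0 * b0 + a1 * b1 + a2 * b2) ^ 2 <= (a0 ^ 2 + a1 ^ 2 + a2 ^ 2) * (b0 ^ 2 + b1 ^ 2 + b2 ^ 2).
Proof.
  pose proof (pow2_ge_0 (a0 * b1 - a1 * b0)); pose proof (pow2_ge_0 (a0 * b2 - a2 * b0));
    pose proof (pow2_ge_0 (a1 * b2 - a2 * b1)).
  nra.
Qed.

Lemma variance3 (p0 p1 p2 v0 v1 v2 : R) : p0 + p1 + p2 = 1 ->
  p0 * v0 ^ 2 + p1 * v1 ^ 2 + p2 * v2 ^ 2 - (p0 * v0 + p1 * v1 + p2 * v2) ^ 2
  = p0 * p1 * (v0 - v1) ^ 2 + p0 * p2 * (v0 - v2) ^ 2 + p1 * p2 * (v1 - v2) ^ 2.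
Proof. intros hs; replace p0 with (1 - p1 - p2) by lra; ring. Qed.

Definition spread3 (v0 v1 v2 : R) := (v0 - v1) ^ 2 + (v0 - v2) ^ 2 + (v1 - v2) ^ 2.

Lemma variance_le_spread3 (p0 p1 p2 v0 v1 v2 : R) :
  0 <= p0 -> 0 <= p1 -> 0 <= p2 -> p0 + p1 + p2 = 1 ->
  p0 * v0 ^ 2 + p1 * v1 ^ 2 + p2 * v2 ^ 2 - (p0 * v0 + p1 * v1 + p2 * v2) ^ 2 <= spread3 v0 v1 v2.
Proof.
  intros h0 h1 h2 hs; rewrite variance3 by exact hs.
  assert (hpair : forall a b d, 0 <= a <= 1 -> 0 <= b <= 1 -> a * b * d ^ 2 <= d ^ 2).
  { intros a b d ha hb; pose proof (pow2_ge_0 d).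
    assert (a * b <= 1) by nra. nra. }
  pose proof (hpair p0 p1 (v0 - v1) ltac:(lra) ltac:(lra));
    pose proof (hpair p0 p2 (v0 - v2) ltac:(lra) ltac:(lra));
    pose proof (hpair p1 p2 (v1 - v2) ltac:(lra) ltac:(lra)).
  unfold spread3; lra.
Qed.

Lemma spread3_le_deviation (v0 v1 v2 c : R) :
  spread3 v0 v1 v2 <= 4 * ((v0 - c) ^ 2 + (v1 - c) ^ 2 + (v2 - c) ^ 2).
Proof.
  unfold spread3.
  pose proof (pow2_ge_0 (v0 + v1 - 2 * c)); pose proof (pow2_ge_0 (v0 + v2 - 2 * c));
    pose proof (pow2_ge_0 (v1 + v2 - 2 * c)).
  nra.
Qed.

Lemma deviation_le_spread3 (e0 e1 e2 v0 v1 v2 : R) :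
  0 <= e0 -> 0 <= e1 -> 0 <= e2 -> e0 + e1 + e2 = 1 -> e0 * v0 + e1 * v1 + e2 * v2 = 1 ->
  (e0 * v0 - e0) ^ 2 + (e1 * v1 - e1) ^ 2 + (e2 * v2 - e2) ^ 2 <= spread3 v0 v1 v2.
Proof.
  intros h0 h1 h2 hs hv.
  pose proof (variance_le_spread3 e0 e1 e2 v0 v1 v2 h0 h1 h2 hs) as hvar; rewrite hv in hvar.
  assert (hterm : forall ei vi, 0 <= ei <= 1 -> (ei * vi - ei) ^ 2 <= ei * (vi - 1) ^ 2).
  { intros ei vi hei; pose proof (pow2_ge_0 (vi - 1)).
    replace ((ei * vi - ei) ^ 2) with (ei * (ei * (vi - 1) ^ 2)) by ring.
    apply Rmult_le_compat_l; nra. }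
  assert (hmean : e0 * (v0 - 1) ^ 2 + e1 * (v1 - 1) ^ 2 + e2 * (v2 - 1) ^ 2
                  = e0 * v0 ^ 2 + e1 * v1 ^ 2 + e2 * v2 ^ 2 - 1 ^ 2).
  { transitivity (e0 * v0 ^ 2 + e1 * v1 ^ 2 + e2 * v2 ^ 2 - 2 * (e0 * v0 + e1 * v1 + e2 * v2)
      + (e0 + e1 + e2)); [ring | rewrite hs, hv; ring]. }
  pose proof (hterm e0 v0 ltac:(lra)); pose proof (hterm e1 v1 ltac:(lra));
    pose proof (hterm e2 v2 ltac:(lra)).
  lra.
Qed.

Lemma spread3_le_of_small_variance (e0 e1 e2 p0 p1 p2 v0 v1 v2 eta : R) :
  0 <= e0 -> 0 <= e1 -> 0 <= e2 -> e0 + e1 + e2 = 1 -> e0 * v0 + e1 * v1 + e2 * v2 = 1 ->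
  0 < p0 -> 0 < p1 -> 0 < p2 -> p0 + p1 + p2 = 1 ->
  0 <= eta -> eta <= p0 * p1 * p2 / 8 ->
  p0 * v0 ^ 2 + p1 * v1 ^ 2 + p2 * v2 ^ 2 - (p0 * v0 + p1 * v1 + p2 * v2) ^ 2
    <= eta * (p0 * v0 + p1 * v1 + p2 * v2) ^ 2 ->
  spread3 v0 v1 v2 <= 4 * eta / (p0 * p1 * p2).
Proof.
  intros he0 he1 he2 hes hv hp0 hp1 hp2 hps heta0 heta hvar.
  rewrite variance3 in hvar by exact hps.
  set (m := p0 * p1 * p2) in *; set (D := p0 * v0 + p1 * v1 + p2 * v2) in *.
  set (S := spread3 v0 v1 v2).
  assert (hm : 0 < m) by (unfold m; repeat apply Rmult_lt_0_compat; assumption).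
  assert (hS0 : 0 <= S) by (unfold S, spread3; pose proof (pow2_ge_0 (v0 - v1));
    pose proof (pow2_ge_0 (v0 - v2)); pose proof (pow2_ge_0 (v1 - v2)); lra).
  assert (hlow : m * S <= eta * D ^ 2).
  { assert (hmp : forall a b c, 0 < a -> 0 < b -> 0 < c -> c <= 1 -> a * b * c <= a * b)
      by (intros a b c ha hb hc hc1; pose proof (Rmult_lt_0_compat a b ha hb); nra).
    pose proof (hmp p0 p1 p2 hp0 hp1 hp2 ltac:(lra));
      pose proof (hmp p0 p2 p1 hp0 hp2 hp1 ltac:(lra));
      pose proof (hmp p1 p2 p0 hp1 hp2 hp0 ltac:(lra)).
    pose proof (pow2_ge_0 (v0 - v1)); pose proof (pow2_ge_0 (v0 - v2));
      pose proof (pow2_ge_0 (v1 - v2)).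
    unfold m, S, spread3 in *; nra. }
  (* [D - 1 = (p1 - e1) (v1 - v0) + (p2 - e2) (v2 - v0)] with [|p_i - e_i| <= 1]. *)
  assert (hD : D ^ 2 <= 2 + 4 * S).
  { assert (hD1 : D - 1 = (p1 - e1) * (v1 - v0) + (p2 - e2) * (v2 - v0))
      by (unfold D; rewrite <- hv; replace p0 with (1 - p1 - p2) by lra;
          replace e0 with (1 - e1 - e2) by lra; ring).
    assert ((D - 1) ^ 2 <= 2 * S).
    { rewrite hD1; unfold S, spread3.
      pose proof (pow2_ge_0 ((p1 - e1) * (v1 - v0) - (p2 - e2) * (v2 - v0))).
      assert ((p1 - e1) ^ 2 <= 1) by nra; assert ((p2 - e2) ^ 2 <= 1) by nra.
      pose proof (pow2_ge_0 (v0 - v1)); pose proof (pow2_ge_0 (v0 - v2));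
        pose proof (pow2_ge_0 (v1 - v2)).
      nra. }
    pose proof (pow2_ge_0 (D - 2)); nra. }
  apply (Rmult_le_reg_l m); [exact hm |].
  replace (m * (4 * eta / m)) with (4 * eta) by (field; lra).
  nra.
Qed.

(** * A Lyapunov function *)

Section Lyapunov.

Variables (p : params) (l e0 e1 e2 w0 w1 w2 : R).
Hypothesis hp : params_pos p.
Hypothesis HP : perron_data p l e0 e1 e2 w0 w1 w2.

Definition lyap_den (x0 x1 x2 : R) := w0 * x0 + w1 * x1 + w2 * x2.
Definition lyap_num (x0 x1 x2 : R) := w0 * x0 ^ 2 / e0 + w1 * x1 ^ 2 / e1 + w2 * x2 ^ 2 / e2.
Definition lyap (x0 x1 x2 : R) := lyap_num x0 x1 x2 / lyap_den x0 x1 x2 ^ 2.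

Definition dissipation (x0 x1 x2 : R) :=
  w0 * x0 * Qx0 p x0 x1 x2 / e0 + w1 * x1 * Qx1 p x0 x1 x2 / e1 + w2 * x2 * Qx2 p x0 x1 x2 / e2
  - l * lyap_num x0 x1 x2.

Lemma lyap_derivative (x0 x1 x2 : R -> R) (t : R) :
  is_solution p x0 x1 x2 -> 0 < t -> lyap_den (x0 t) (x1 t) (x2 t) <> 0 ->
  is_derive (fun s => lyap (x0 s) (x1 s) (x2 s)) t
    (2 * dissipation (x0 t) (x1 t) (x2 t) / lyap_den (x0 t) (x1 t) (x2 t) ^ 2).
Proof.
  destruct HP as [he0 he1 he2 _ hw0 _ _ _ _ hl _].
  intros hsol ht hD.
  destruct (solution_derivatives p x0 x1 x2 t hsol ht) as (D0 & D1 & D2 & ?).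
  destruct (F_Qx p (x0 t) (x1 t) (x2 t)) as (g0 & g1 & g2).
  pose proof (left_eigen_Qx p l w0 w1 w2 (x0 t) (x1 t) (x2 t) hl) as hwQ.
  (* Once [Qx0] is eliminated through [w . Q x = l (w . x)], what remains is a rational identity. *)
  assert (hQ0 : Qx0 p (x0 t) (x1 t) (x2 t) = (l * lyap_den (x0 t) (x1 t) (x2 t)
    - w1 * Qx1 p (x0 t) (x1 t) (x2 t) - w2 * Qx2 p (x0 t) (x1 t) (x2 t)) / w0)
    by (unfold lyap_den; rewrite <- hwQ; field; lra).
  unfold lyap, dissipation, lyap_num, lyap_den in *.
  auto_derive.
  - repeat split; try tauto.
    rewrite Rmult_1_r; apply Rmult_integral_contrapositive_currified; exact hD.
  - rewrite D0, D1, D2, g0, g1, g2, hQ0. field. repeat split; lra.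
Qed.

Lemma dissipation_sum_of_squares (x0 x1 x2 : R) :
  dissipation x0 x1 x2 =
  - / 2 * ((w0 * be2 p * e1 + w1 * al2 p * e0) * (x0 / e0 - x1 / e1) ^ 2
         + (w0 * ga2 p * e2 + w2 * al3 p * e0) * (x0 / e0 - x2 / e2) ^ 2
         + (w1 * ga3 p * e2 + w2 * be3 p * e1) * (x1 / e1 - x2 / e2) ^ 2).
Proof.
  destruct HP as [he0 he1 he2 _ _ _ _ _ (r0 & r1 & r2) (c0 & c1 & c2) _].
  (* The defect terms below vanish because [e] and [w] are right and left eigenvectors. *)
  transitivity (- / 2 * ((w0 * be2 p * e1 + w1 * al2 p * e0) * (x0 / e0 - x1 / e1) ^ 2
         + (w0 * ga2 p * e2 + w2 * al3 p * e0) * (x0 / e0 - x2 / e2) ^ 2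
         + (w1 * ga3 p * e2 + w2 * be3 p * e1) * (x1 / e1 - x2 / e2) ^ 2)
    + / 2 * ((x0 / e0) ^ 2 * (w0 * (Qx0 p e0 e1 e2 - l * e0)
                              + e0 * (w0 * al1 p + w1 * al2 p + w2 * al3 p - l * w0))
           + (x1 / e1) ^ 2 * (w1 * (Qx1 p e0 e1 e2 - l * e1)
                              + e1 * (w0 * be2 p + w1 * q11 p + w2 * be3 p - l * w1))
           + (x2 / e2) ^ 2 * (w2 * (Qx2 p e0 e1 e2 - l * e2)
                              + e2 * (w0 * ga2 p + w1 * ga3 p + w2 * q22 p - l * w2)))).
  - unfold dissipation, lyap_num, Qx0, Qx1, Qx2. field. repeat split; lra.
  - rewrite r0, r1, r2, c0, c1, c2, !Rminus_diag. ring.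
Qed.

Lemma dissipation_nonpos (x0 x1 x2 : R) : dissipation x0 x1 x2 <= 0.
Proof.
  destruct HP as [he0 he1 he2 _ hw0 hw1 hw2 _ _ _ _].
  destruct hp as (h1 & h2 & h3 & _ & h5 & h6 & _ & _ & h9 & h10 & _).
  rewrite dissipation_sum_of_squares.
  assert (hsq : forall a y, 0 < a -> 0 <= a * y ^ 2)
    by (intros; apply Rmult_le_pos; [lra | apply pow2_ge_0]).
  assert (0 <= (w0 * be2 p * e1 + w1 * al2 p * e0) * (x0 / e0 - x1 / e1) ^ 2)
    by (apply hsq; repeat (apply Rplus_lt_0_compat || apply Rmult_lt_0_compat); assumption).
  assert (0 <= (w0 * ga2 p * e2 + w2 * al3 p * e0) * (x0 / e0 - x2 / e2) ^ 2)
    by (apply hsq; repeat (apply Rplus_lt_0_compat || apply Rmult_lt_0_compat); assumption).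
  assert (0 <= (w1 * ga3 p * e2 + w2 * be3 p * e1) * (x1 / e1 - x2 / e2) ^ 2)
    by (apply hsq; repeat (apply Rplus_lt_0_compat || apply Rmult_lt_0_compat); assumption).
  lra.
Qed.

Lemma lyap_nonincreasing (x0 x1 x2 : R -> R) (T : R) :
  is_solution p x0 x1 x2 -> 0 <= T ->
  (forall t, 0 <= t <= T -> 0 < lyap_den (x0 t) (x1 t) (x2 t)) ->
  lyap (x0 T) (x1 T) (x2 T) <= lyap (x0 0) (x1 0) (x2 0).
Proof.
  intros hsol hT hD.
  apply (nonincreasing_on_interval (fun t => lyap (x0 t) (x1 t) (x2 t))
    (fun t => 2 * dissipation (x0 t) (x1 t) (x2 t) / lyap_den (x0 t) (x1 t) (x2 t) ^ 2) T hT).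
  - intros t ht; apply lyap_derivative; [exact hsol | lra |].
    apply Rgt_not_eq, hD; lra.
  - intros t ht; pose proof (dissipation_nonpos (x0 t) (x1 t) (x2 t)).
    assert (hD2 : 0 < lyap_den (x0 t) (x1 t) (x2 t) ^ 2) by (apply pow_lt, hD; lra).
    unfold Rdiv; pose proof (Rinv_0_lt_compat _ hD2); nra.
  - destruct hsol as (_ & h0 & h1 & h2).
    pose proof (hD 0 ltac:(lra)).
    unfold lyap, lyap_num, lyap_den in *; unfold Rdiv; solve_filterlim.
    apply pow_nonzero, Rgt_not_eq; assumption.
Qed.

Lemma lyap_weighted (x0 x1 x2 : R) :
  lyap_num x0 x1 x2 = w0 * e0 * (x0 / e0) ^ 2 + w1 * e1 * (x1 / e1) ^ 2 + w2 * e2 * (x2 / e2) ^ 2 /\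
  lyap_den x0 x1 x2 = w0 * e0 * (x0 / e0) + w1 * e1 * (x1 / e1) + w2 * e2 * (x2 / e2).
Proof.
  destruct HP as [he0 he1 he2 _ _ _ _ _ _ _ _].
  unfold lyap_num, lyap_den; split; field; repeat split; lra.
Qed.

Lemma lyap_den_near_perron : exists r, 0 < r /\ forall x0 x1 x2,
  sqdist x0 x1 x2 e0 e1 e2 < r -> 1 / 2 <= lyap_den x0 x1 x2.
Proof.
  destruct HP as [_ _ _ _ hw0 _ _ hwe _ _ _].
  assert (hw : 0 < w0 ^ 2 + w1 ^ 2 + w2 ^ 2) by (pose proof (pow2_ge_0 w1);
    pose proof (pow2_ge_0 w2); pose proof (pow_lt w0 2 hw0); lra).
  exists (/ (4 * (w0 ^ 2 + w1 ^ 2 + w2 ^ 2))); split; [apply Rinv_0_lt_compat; lra |].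
  intros x0 x1 x2 hx.
  assert (hD1 : lyap_den x0 x1 x2 - 1 = w0 * (x0 - e0) + w1 * (x1 - e1) + w2 * (x2 - e2))
    by (unfold lyap_den; rewrite <- hwe; ring).
  pose proof (cauchy_schwarz3 w0 w1 w2 (x0 - e0) (x1 - e1) (x2 - e2)) as hcs.
  rewrite <- hD1 in hcs; fold (sqdist x0 x1 x2 e0 e1 e2) in hcs.
  apply (Rmult_lt_compat_l (w0 ^ 2 + w1 ^ 2 + w2 ^ 2)) in hx; [| exact hw].
  replace ((w0 ^ 2 + w1 ^ 2 + w2 ^ 2) * / (4 * (w0 ^ 2 + w1 ^ 2 + w2 ^ 2))) with (/ 4) in hx
    by (field; apply Rgt_not_eq, hw).
  nra.
Qed.

Lemma lyap_excess_upper : exists C, 0 < C /\ forall x0 x1 x2,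
  lyap_num x0 x1 x2 - lyap_den x0 x1 x2 ^ 2 <= C * sqdist x0 x1 x2 e0 e1 e2.
Proof.
  destruct HP as [he0 he1 he2 _ hw0 hw1 hw2 hwe _ _ _].
  set (c := / e0 ^ 2 + / e1 ^ 2 + / e2 ^ 2).
  assert (hinv : forall ei, 0 < ei -> 0 < / ei ^ 2)
    by (intros; apply Rinv_0_lt_compat, pow_lt; lra).
  assert (hc : 0 < c) by (unfold c; pose proof (hinv e0 he0); pose proof (hinv e1 he1);
    pose proof (hinv e2 he2); lra).
  exists (4 * c); split; [lra |]; intros x0 x1 x2.
  destruct (lyap_weighted x0 x1 x2) as (-> & ->).
  eapply Rle_trans; [apply variance_le_spread3; try lra; apply Rmult_le_pos; lra |].
  eapply Rle_trans; [apply (spread3_le_deviation _ _ _ 1) |].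
  assert (hdev : forall xi ei, 0 < ei -> / ei ^ 2 <= c -> (xi / ei - 1) ^ 2 <= c * (xi - ei) ^ 2).
  { intros xi ei hei hc'.
    replace ((xi / ei - 1) ^ 2) with (/ ei ^ 2 * (xi - ei) ^ 2) by (field; lra).
    apply Rmult_le_compat_r; [apply pow2_ge_0 | exact hc']. }
  pose proof (hinv e0 he0); pose proof (hinv e1 he1); pose proof (hinv e2 he2).
  pose proof (hdev x0 e0 he0 ltac:(unfold c; lra));
    pose proof (hdev x1 e1 he1 ltac:(unfold c; lra));
    pose proof (hdev x2 e2 he2 ltac:(unfold c; lra)).
  unfold sqdist; lra.
Qed.

Lemma lyap_excess_lower : exists eta0 C, 0 < eta0 /\ 0 < C /\ forall eta x0 x1 x2,
  0 <= eta <= eta0 -> x0 + x1 + x2 = 1 ->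
  lyap_num x0 x1 x2 <= (1 + eta) * lyap_den x0 x1 x2 ^ 2 ->
  sqdist x0 x1 x2 e0 e1 e2 <= C * eta.
Proof.
  destruct HP as [he0 he1 he2 hes hw0 hw1 hw2 hwe _ _ _].
  assert (hp0 : 0 < w0 * e0) by (apply Rmult_lt_0_compat; lra).
  assert (hp1 : 0 < w1 * e1) by (apply Rmult_lt_0_compat; lra).
  assert (hp2 : 0 < w2 * e2) by (apply Rmult_lt_0_compat; lra).
  set (m := w0 * e0 * (w1 * e1) * (w2 * e2)).
  assert (hm : 0 < m) by (unfold m; repeat apply Rmult_lt_0_compat; assumption).
  exists (m / 8), (4 / m); split; [lra | split; [apply Rdiv_lt_0_compat; lra |]].
  intros eta x0 x1 x2 heta hx hN.
  assert (hxe : forall xi ei, 0 < ei -> ei * (xi / ei) = xi) by (intros; field; lra).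
  assert (hv : e0 * (x0 / e0) + e1 * (x1 / e1) + e2 * (x2 / e2) = 1) by (rewrite !hxe; lra).
  unfold sqdist; rewrite <- (hxe x0 e0), <- (hxe x1 e1), <- (hxe x2 e2) by assumption.
  eapply Rle_trans; [apply deviation_le_spread3; lra |].
  replace (4 / m * eta) with (4 * eta / m) by (field; lra).
  destruct (lyap_weighted x0 x1 x2) as (hnum & hden); rewrite hnum, hden in hN.
  apply (spread3_le_of_small_variance e0 e1 e2); fold m; lra.
Qed.

Lemma lyap_near_perron : exists r C, 0 < r /\ 0 < C /\ forall x0 x1 x2,
  sqdist x0 x1 x2 e0 e1 e2 < r ->
  0 < lyap_den x0 x1 x2 /\ lyap x0 x1 x2 <= 1 + C * sqdist x0 x1 x2 e0 e1 e2.
Proof.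
  destruct lyap_den_near_perron as (r & hr & hden).
  destruct lyap_excess_upper as (C & hC & hup).
  exists r, (4 * C); do 2 (split; [lra |]); intros x0 x1 x2 hx.
  pose proof (hden x0 x1 x2 hx) as hD; pose proof (hup x0 x1 x2) as hN.
  split; [lra |].
  assert (hD2 : / 4 <= lyap_den x0 x1 x2 ^ 2) by nra.
  assert (hCh : 0 <= C * sqdist x0 x1 x2 e0 e1 e2).
  { apply Rmult_le_pos; [lra |]. unfold sqdist; pose proof (pow2_ge_0 (x0 - e0));
      pose proof (pow2_ge_0 (x1 - e1)); pose proof (pow2_ge_0 (x2 - e2)); lra. }
  assert (C * sqdist x0 x1 x2 e0 e1 e2
          <= 4 * C * sqdist x0 x1 x2 e0 e1 e2 * lyap_den x0 x1 x2 ^ 2) by nra.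
  unfold lyap; apply (Rmult_le_reg_r (lyap_den x0 x1 x2 ^ 2)); [lra |].
  unfold Rdiv; rewrite Rmult_assoc, Rinv_l, Rmult_1_r by (apply Rgt_not_eq; lra).
  lra.
Qed.

Lemma near_perron_bounded (x0 x1 x2 : R) :
  sqdist x0 x1 x2 e0 e1 e2 < 1 -> Rabs x0 <= 2 /\ Rabs x1 <= 2 /\ Rabs x2 <= 2.
Proof.
  destruct HP as [he0 he1 he2 hes _ _ _ _ _ _ _]; unfold sqdist; intros hx.
  pose proof (pow2_ge_0 (x0 - e0)); pose proof (pow2_ge_0 (x1 - e1));
    pose proof (pow2_ge_0 (x2 - e2)).
  repeat split; apply Rabs_le; split; nra.
Qed.

Lemma lyap_trap (x0 x1 x2 : R -> R) (b eta C T : R) :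
  is_solution p x0 x1 x2 -> x0 0 + x1 0 + x2 0 = 1 ->
  lyap (x0 0) (x1 0) (x2 0) <= 1 + eta -> 0 <= T -> b <= 1 ->
  (forall y0 y1 y2, sqdist y0 y1 y2 e0 e1 e2 < b -> 0 < lyap_den y0 y1 y2) ->
  (forall y0 y1 y2, y0 + y1 + y2 = 1 ->
     lyap_num y0 y1 y2 <= (1 + eta) * lyap_den y0 y1 y2 ^ 2 ->
     sqdist y0 y1 y2 e0 e1 e2 <= C * eta) ->
  (forall t, 0 <= t <= T -> sqdist (x0 t) (x1 t) (x2 t) e0 e1 e2 < b) ->
  sqdist (x0 T) (x1 T) (x2 T) e0 e1 e2 <= C * eta.
Proof.
  intros hsol hs0 hV0 hT hb1 hden hlow hnear.
  destruct (growth_lower_bound p 2) as (K & hK).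
  assert (hsum : x0 T + x1 T + x2 T = 1).
  { apply (solution_sum_one p x0 x1 x2 K T hsol hs0 hT).
    intros t ht; destruct (near_perron_bounded (x0 t) (x1 t) (x2 t)) as (? & ? & ?);
      [pose proof (hnear t ltac:(lra)); lra |].
    apply hK; assumption. }
  assert (hDT : 0 < lyap_den (x0 T) (x1 T) (x2 T)) by (apply hden, hnear; lra).
  pose proof (lyap_nonincreasing x0 x1 x2 T hsol hT
    (fun t ht => hden _ _ _ (hnear t ht))) as hVT.
  apply hlow; [exact hsum |].
  assert (hD2 : 0 < lyap_den (x0 T) (x1 T) (x2 T) ^ 2) by (apply pow_lt; exact hDT).
  unfold lyap in hVT, hV0.
  apply (Rmult_le_reg_r (/ lyap_den (x0 T) (x1 T) (x2 T) ^ 2)); [apply Rinv_0_lt_compat; lra |].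
  rewrite Rmult_assoc, Rinv_r, Rmult_1_r by (apply Rgt_not_eq, hD2).
  unfold Rdiv in hVT, hV0; lra.
Qed.

Lemma perron_lyapunov_stable : lyapunov_stable p e0 e1 e2.
Proof.
  intros eps heps.
  destruct lyap_near_perron as (r & C1 & hr & hC1 & hnear).
  destruct lyap_excess_lower as (eta0 & C2 & heta0 & hC2 & hlow).
  assert (hscale : forall C x y, 0 < C -> x <= y / C -> C * x <= y).
  { intros C x y hC hx; apply (Rmult_le_compat_l C) in hx; [| lra].
    replace (C * (y / C)) with y in hx by (field; apply Rgt_not_eq, hC); exact hx. }
  (* Radii: [b] keeps [V] defined and [x] bounded, [c < b] is the target for [|x - e|^2], and
     starting within [r0] makes [V <= 1 + eta], which traps the solution within [c]. *)
  set (b := Rmin 1 r).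
  assert (hb : 0 < b <= 1) by (split; [apply Rmin_glb_lt | apply Rmin_l]; lra).
  assert (hbr : b <= r) by apply Rmin_r.
  set (c := Rmin (eps ^ 2) b / 2).
  assert (hc : 0 < c /\ c < b /\ c < eps ^ 2).
  { pose proof (Rmin_l (eps ^ 2) b); pose proof (Rmin_r (eps ^ 2) b).
    assert (0 < Rmin (eps ^ 2) b) by (apply Rmin_glb_lt; [apply pow_lt |]; lra).
    unfold c; lra. }
  set (eta := Rmin eta0 (c / C2)).
  assert (heta : 0 < eta <= eta0)
    by (split; [apply Rmin_glb_lt, Rdiv_lt_0_compat | apply Rmin_l]; lra).
  assert (hetac : C2 * eta <= c) by (apply hscale; [lra | apply Rmin_r]).
  set (r0 := Rmin b (eta / C1)).
  assert (hr0 : 0 < r0) by (apply Rmin_glb_lt; [| apply Rdiv_lt_0_compat]; lra).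
  assert (hr0b : r0 <= b) by apply Rmin_l.
  exists (sqrt r0); split; [apply sqrt_lt_R0; exact hr0 |].
  intros x0 x1 x2 hsol (_ & _ & _ & hs0) hdist t ht.
  apply sqrt_lt_0_alt in hdist; fold (sqdist (x0 0) (x1 0) (x2 0) e0 e1 e2) in hdist.
  assert (hV0 : lyap (x0 0) (x1 0) (x2 0) <= 1 + eta).
  { destruct (hnear (x0 0) (x1 0) (x2 0) ltac:(lra)) as (_ & hV).
    assert (C1 * sqdist (x0 0) (x1 0) (x2 0) e0 e1 e2 <= eta)
      by (apply hscale; [lra | apply (Rle_trans _ r0); [lra | apply Rmin_r]]).
    lra. }
  assert (hbarrier : sqdist (x0 t) (x1 t) (x2 t) e0 e1 e2 <= c).
  { destruct (solution_sqdist_continuous p x0 x1 x2 e0 e1 e2 hsol) as (hcont & hright).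
    apply (continuity_barrier (fun s => sqdist (x0 s) (x1 s) (x2 s) e0 e1 e2) b c);
      try tauto; try lra.
    intros T hT hnearT.
    apply (Rle_trans _ (C2 * eta)); [| exact hetac].
    apply (lyap_trap x0 x1 x2 b eta C2 T hsol hs0 hV0 hT); try tauto.
    - intros y0 y1 y2 hy; apply hnear; lra.
    - intros y0 y1 y2; apply hlow; lra. }
  unfold dist3; fold (sqdist (x0 t) (x1 t) (x2 t) e0 e1 e2).
  rewrite <- (sqrt_pow2 eps) by lra.
  apply sqrt_lt_1_alt; split; [apply Rplus_le_le_0_compat; [apply Rplus_le_le_0_compat |];
    apply pow2_ge_0 | lra].
Qed.

End Lyapunov.

Theorem theorem3 (p : params) (hp : params_pos p) :
  exists e0 e1 e2 : R,
    (0 < e0 /\ 0 < e1 /\ 0 < e2 /\ in_simplex e0 e1 e2 /\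
     is_fixed_point p e0 e1 e2) /\
    (forall y0 y1 y2 : R,
       0 < y0 -> 0 < y1 -> 0 < y2 -> in_simplex y0 y1 y2 ->
       is_fixed_point p y0 y1 y2 -> y0 = e0 /\ y1 = e1 /\ y2 = e2) /\
    lyapunov_stable p e0 e1 e2.
Proof.
  destruct (perron_data_exists p hp) as (l & e0 & e1 & e2 & w0 & w1 & w2 & HP).
  exists e0, e1, e2; split; [| split].
  - pose proof HP as [he0 he1 he2 hs _ _ _ _ _ _ _].
    refine (conj he0 (conj he1 (conj he2 (conj _ _)))); [unfold in_simplex; lra |].
    exact (perron_fixed_point p l e0 e1 e2 w0 w1 w2 HP).
  - exact (positive_fixed_point_unique p l e0 e1 e2 w0 w1 w2 HP).
  - exact (perron_lyapunov_stable p l e0 e1 e2 w0 w1 w2 hp HP).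
Qed.
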